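(* Let $B_n=\binom{2n}{n}$ for $n\ge0$ and $B_n=0$ for $n<0$, and let $D_m(B;n)=\det(B_{i+j+m})_{i,j=0}^{n-1}$. Then for every integer $m\ge1$: $D_{-m}(B;n)=0$ for $1\le n\le m$, and for $n\ge m+1$ $$D_{-m}(B;n)=(-1)^{\binom{m+1}{2}}\,2^{\,n-m-1}\,p_{m+1}(n-m-1).$$
   Context: For integers $m,n\ge 0$, $p_m(n)=\prod_{1\le i\le j\le m-1}\frac{2n+i+j}{i+j}$ (empty product $=1$). *)

From mathcomp Require Import all_boot all_order all_algebra.
Set Implicit Arguments. Unset Strict Implicit. Unset Printing Implicit Defensive.
Import Order.TTheory GRing.Theory Num.Theory.
Local Open Scope ring_scope.

Definition Bc (k : int) : rat :=
  match k with
  | Posz k' => ('C(k'.*2, k'))%:R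
  | Negz _ => 0
  end.

Definition Dhank (m : int) (n : nat) : rat :=
  \det (\matrix_(i < n, j < n) Bc (i%:Z + j%:Z + m)).

Definition pm (m n : nat) : rat :=
  \prod_(1 <= i < m) \prod_(i <= j < m) (((2 * n + i + j)%N)%:R / ((i + j)%N)%:R).

(* The Hankel matrix factors as [(C(2i, i + k))_(i,k) * G] with a unitriangular
   left factor.  Column [j >= m] of [G] comes from Vandermonde's convolution and
   carries [C(2b, b + k)] ([b = j - m]); column [j < m] comes from multiplying by
   the series of [(1 + x)^(-2c-2)] and carries [(-1)^(k+c+1) C(k + c, 2c + 1)]
   ([c = m - 1 - j]).  For [n = m + N], moving the last [m] rows of [G] to the top
   makes it block lower triangular: the lower block is triangular with
   determinant [2^(N-1)], and the upper one is, up to diagonal scalings, the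
   matrix [(Q_c((a + N)^2))_(a,c)] of the monic polynomials
   [Q_c(x) = prod_(t <= c) (x - t^2)], hence a Vandermonde determinant in the
   nodes [(a + N)^2], whose product telescopes to [p_(m+1)(N - 1)]. *)

From mathcomp Require Import all_boot all_order all_algebra.
From mathcomp Require Import fingroup perm ring zify.
Set Implicit Arguments. Unset Strict Implicit. Unset Printing Implicit Defensive.
Import Order.TTheory GRing.Theory Num.Theory.
Local Open Scope ring_scope.

Lemma sum_ord_trunc (V : nmodType) (F : nat -> V) n c : (c <= n)%N ->
  (forall t, (c <= t)%N -> F t = 0) -> \sum_(t < n) F t = \sum_(t < c) F t.
Proof.
move=> le_cn F0; rewrite -(big_mkord xpredT) (big_cat_nat (leq0n c) le_cn) /=.
rewrite big_mkord [X in _ + X]big1_seq ?addr0 // => t /andP[_].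
by rewrite mem_index_iota => /andP[/F0].
Qed.

Lemma sum_ord_window (V : nmodType) (F : nat -> V) n r s : (r + s < n)%N ->
  (forall k, (k < r)%N -> F k = 0) -> (forall k, (r + s < k)%N -> F k = 0) ->
  \sum_(k < n) F k = \sum_(l < s.+1) F (l + r)%N.
Proof.
move=> lt_n F0l F0r.
rewrite (@sum_ord_trunc _ _ n (r + s.+1)); [|lia|by move=> k ?; apply: F0r; lia].
rewrite -(big_mkord xpredT) (@big_cat_nat _ _ _ r) //=; last by lia.
rewrite [X in X + _]big1_seq ?add0r; last first.
  by move=> k /andP[_]; rewrite mem_index_iota => /andP[_ /F0l].
by rewrite -{1}(add0n r) big_addn addKn big_mkord.
Qed.

(* The coefficient of [x^l] in [(1 + x)^-q]; for [q = 0] the truncated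
   subtraction still yields the coefficients of [1]. *)
Definition negbin (q l : nat) : rat := (-1) ^+ l * 'C(q + l - 1, l)%:R.

Lemma negbin0 l : negbin 0 l = (l == 0%N)%:R.
Proof.
case: l => [|l]; first by rewrite /negbin expr0 mul1r bin0.
by rewrite /negbin bin_small ?mulr0 //= add0n subSS subn0.
Qed.

Lemma negbinSS q l : negbin q.+1 l.+1 = negbin q l.+1 - negbin q.+1 l.
Proof.
rewrite /negbin !addSn !subSS !subn0 addnS /= exprS binS natrD subn1 /=.
ring.
Qed.

Lemma negbin_convolutionS q p s :
  \sum_(l < s.+2) negbin q.+1 l * 'C(p, s.+1 - l)%:R =
  \sum_(l < s.+2) negbin q l * 'C(p, s.+1 - l)%:R
  - \sum_(l < s.+1) negbin q.+1 l * 'C(p, s - l)%:R.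
Proof.
rewrite big_ord_recl [in X in _ = X - _]big_ord_recl -addrA.
have -> : negbin q.+1 0 = negbin q 0 by rewrite /negbin !addn0 !bin0.
congr (_ + _); rewrite -sumrB; apply: eq_bigr => i _.
by rewrite negbinSS /bump /= subSS mulrBl.
Qed.

(* [(1 + x)^-q (1 + x)^(q + d) = (1 + x)^d], coefficientwise. *)
Lemma negbin_convolution q d s :
  \sum_(l < s.+1) negbin q l * 'C(q + d, s - l)%:R = 'C(d, s)%:R.
Proof.
elim: q d s => [|q IHq] d s.
  rewrite big_ord_recl negbin0 mul1r subn0 big1 ?addr0 // => i _.
  by rewrite negbin0 mul0r.
elim: s => [|s IHs]; first by rewrite big_ord1 /negbin !bin0 expr0 mul1r.
by rewrite negbin_convolutionS IHs addSnnS IHq binS natrD addrK.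
Qed.

Lemma cbin_vandermonde i b :
  ('C((i + b).*2, i + b) = 'C(i.*2, i) * 'C(b.*2, b)
    + \sum_(t < i) 'C(i.*2, i + t.+1) * 'C(b.*2, b + t.+1)
    + \sum_(t < b) 'C(i.*2, i + t.+1) * 'C(b.*2, b + t.+1))%N.
Proof.
rewrite doubleD -binomial.Vandermonde.
rewrite -(big_mkord xpredT (fun j => 'C(i.*2, j) * 'C(b.*2, i + b - j))%N).
rewrite (@big_cat_nat _ _ _ i) //=; last by lia.
rewrite (@big_cat_nat _ _ _ i.+1 i (i + b).+1) //=; last by lia.
rewrite big_nat1 addKn addnCA addnA; congr (_ + _ + _)%N.
- rewrite big_nat_rev /= add0n big_mkord; apply: eq_bigr => t _.
  have lt_t := ltn_ord t.
  rewrite -(@bin_sub i.*2 (i + t.+1)); last by lia.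
  by congr ('C(_, _) * 'C(_, _))%N; lia.
- rewrite -{1}(add0n i.+1) big_addn.
  have -> : ((i + b).+1 - i.+1 = b)%N by lia.
  rewrite big_mkord; apply: eq_bigr => t _.
  have lt_t := ltn_ord t.
  rewrite -(@bin_sub b.*2 (b + t.+1)); last by lia.
  by congr ('C(_, _) * 'C(_, _))%N; lia.
Qed.

Lemma cbin_sum_shift n i b : (i < n)%N -> (b < n)%N ->
  (\sum_(k < n) 'C(i.*2, i + k) *
     (if (k : nat) == 0%N then 'C(b.*2, b) else 'C(b.*2, b + k) * 2)
   = 'C((i + b).*2, i + b))%N.
Proof.
case: n => [//|n] lt_in lt_bn.
rewrite big_ord_recl /= addn0 cbin_vandermonde -addnA; congr (_ + _)%N.
set h := fun t => ('C(i.*2, i + t.+1) * 'C(b.*2, b + t.+1))%N.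
rewrite (eq_bigr (fun t : 'I_n => h t + h t)%N); last first.
  by move=> t _; rewrite /bump /= /h mulnA muln2 addnn.
rewrite big_split /= {1}(@sum_ord_trunc _ h n i) ?(@sum_ord_trunc _ h n b) //.
- by move=> t le_bt; rewrite /h (@bin_small b.*2) ?muln0 //; lia.
- by move=> t le_it; rewrite /h bin_small ?mul0n //; lia.
Qed.

Lemma Bc_neg (x : int) : x < 0 -> Bc x = 0.
Proof. by case: x. Qed.

Lemma cbin_sum_neg n i c : (i < n)%N ->
  \sum_(k < n) 'C(i.*2, i + k)%:R *
     ((-1) ^+ (k + c).+1 * 'C(k + c, c.*2.+1)%:R) = Bc (i%:Z - c.+1%:Z).
Proof.
move=> lt_in; have [lt_ci | le_ic] := ltnP c i; last first.
  rewrite Bc_neg; last by lia.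
  apply: big1 => k _; have [le_kc | lt_ck] := leqP k c.
    by rewrite (@bin_small (k + c)) ?mulr0 //; lia.
  by rewrite bin_small ?mul0r //; lia.
have -> : i%:Z - c.+1%:Z = (i - c.+1)%N by lia.
pose F k : rat := 'C(i.*2, i + k)%:R * ((-1) ^+ (k + c).+1 * 'C(k + c, c.*2.+1)%:R).
rewrite (@sum_ord_window _ F n c.+1 (i - c.+1)) /F; [|lia| |]; last first.
- by move=> k lt_k; rewrite bin_small ?mul0r //; lia.
- by move=> k lt_k; rewrite (@bin_small (k + c)) ?mulr0 //; lia.
(* the convolution [(1 + x)^-(2c + 2) (1 + x)^2i = (1 + x)^(2i - 2c - 2)] *)
rewrite /= -(negbin_convolution c.+1.*2 (i - c.+1).*2 (i - c.+1)).
apply: eq_bigr => l _; have lt_l := ltn_ord l.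
have sign : (-1) ^+ (l + c.+1 + c).+1 = (-1) ^+ l :> rat.
  have -> : (l + c.+1 + c).+1 = (l + 2 * c.+1)%N by lia.
  by rewrite exprD exprM sqrrN expr1n mulr1.
have e1 : 'C(l + c.+1 + c, c.*2.+1) = 'C(c.+1.*2 + l - 1, l).
  by rewrite -(@bin_sub _ l); [congr 'C(_, _)|]; lia.
have e2 : 'C(i.*2, i + (l + c.+1)) = 'C(c.+1.*2 + (i - c.+1).*2, i - c.+1 - l).
  by rewrite -(@bin_sub _ (i - c.+1 - l)); [congr 'C(_, _)|]; lia.
by rewrite sign /negbin e1 e2; ring.
Qed.

Definition cbin_mx n : 'M[rat]_n := \matrix_(i, k) 'C((i : nat).*2, i + k)%:R.

Lemma det_cbin_mx n : \det (cbin_mx n) = 1.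
Proof.
rewrite det_trig; last by apply/is_trig_mxP => i j lt_ij; rewrite mxE bin_small //; lia.
by rewrite big1 // => i _; rewrite mxE addnn binn.
Qed.

Definition hankel_coef (m k j : nat) : rat :=
  if (m <= j)%N then
    (if (k : nat) == 0%N then 'C((j - m).*2, j - m) else 'C((j - m).*2, (j - m) + k) * 2)%:R
  else (-1) ^+ (k + (m - j.+1)).+1 * 'C(k + (m - j.+1), (m - j.+1).*2.+1)%:R.

Definition hankel_coef_mx m n : 'M[rat]_n := \matrix_(k, j) hankel_coef m k j.

Lemma hankel_factor m n :
  \matrix_(i < n, j < n) Bc (i%:Z + j%:Z + - m%:Z) = cbin_mx n *m hankel_coef_mx m n.
Proof.
apply/matrixP => i j; rewrite !mxE; under eq_bigr do rewrite !mxE.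
rewrite /hankel_coef; have [le_mj | lt_jm] := leqP m j.
  have -> : i%:Z + j%:Z + - m%:Z = (i + (j - m))%N by lia.
  under eq_bigr do rewrite -natrM.
  by rewrite -natr_sum cbin_sum_shift //; have := ltn_ord j; lia.
have -> : i%:Z + j%:Z + - m%:Z = i%:Z - (m - j.+1).+1%:Z by lia.
by rewrite cbin_sum_neg.
Qed.

Fixpoint rot_perm m N : 'S_(m + N) :=
  match m return 'S_(m + N) with
  | 0 => 1%g
  | m'.+1 => lift_perm (inord m') ord_max (rot_perm m' N)
  end.

Lemma rot_permE m N (i : 'I_(m + N)) :
  rot_perm m N i = (if (i < m)%N then i + N else i - m)%N :> nat.
Proof.
elim: m i => [|m IHm] i /=; first by rewrite perm1 subn0.
have lt_m : (m < (m + N).+1)%N by rewrite ltnS leq_addr.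
case: (unliftP (inord m) i) => [j ->|->]; last by rewrite lift_perm_id /= inordK // ltnSn.
rewrite lift_perm_lift lift_max IHm /= inordK // /bump.
have [le_mj | lt_jm] := leqP m j; rewrite /= ?add1n ?add0n ltnS.
  by rewrite ltnNge le_mj subSS.
by rewrite ltnW.
Qed.

Lemma odd_rot_perm m N : odd_perm (rot_perm m N) = odd (m * N).
Proof.
elim: m => [|m IHm] /=; first by rewrite odd_perm1.
have lt_m : (m < (m + N).+1)%N by rewrite ltnS leq_addr.
rewrite odd_lift_perm IHm inordK //= mulSn !oddD.
by case: (odd m); case: (odd N); case: (odd (m * N)).
Qed.

Fixpoint rev_perm n : 'S_n :=
  match n return 'S_n with
  | 0 => 1%g
  | n'.+1 => lift_perm ord_max ord0 (rev_perm n')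
  end.

Lemma rev_permE n (i : 'I_n) : rev_perm n i = (n - i.+1)%N :> nat.
Proof.
elim: n i => [|n IHn] i /=; first by case: i.
case: (unliftP ord_max i) => [j ->|->]; last by rewrite lift_perm_id /= subnn.
by rewrite lift_perm_lift lift0 IHn subSS lift_max subnSK.
Qed.

Lemma odd_rev_perm n : odd_perm (rev_perm n) = odd 'C(n, 2).
Proof.
elim: n => [|n IHn] /=; first by rewrite odd_perm1.
rewrite odd_lift_perm IHn /= binS bin1 oddD.
by case: (odd n); case: (odd 'C(n, 2)).
Qed.

Lemma det_row_perm (R : comPzRingType) n (s : 'S_n) (A : 'M[R]_n) :
  \det (row_perm s A) = (-1) ^+ s * \det A.
Proof. by rewrite row_permE det_mulmx det_perm. Qed.

Definition hankel_coef_ul m N : 'M[rat]_m := \matrix_(a, j) hankel_coef m (a + N) j.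
Definition hankel_coef_dl m N : 'M[rat]_(N, m) := \matrix_(a, j) hankel_coef m a j.
Definition hankel_coef_dr m N : 'M[rat]_N := \matrix_(a, b) hankel_coef m a (m + b).

Lemma row_perm_hankel_coef_mx m N : (0 < N)%N ->
  row_perm (rot_perm m N) (hankel_coef_mx m (m + N)) =
  block_mx (hankel_coef_ul m N) 0 (hankel_coef_dl m N) (hankel_coef_dr m N).
Proof.
move=> N_gt0; apply/matrixP => i j; rewrite !mxE.
case: (splitP i) => [a ia | a ia]; rewrite mxE; case: (splitP j) => [c jc | c jc];
  rewrite !mxE rot_permE ia.
- by rewrite ltn_ord -jc.
- rewrite ltn_ord jc /hankel_coef leq_addr addKn ifF; last by have := ltn_ord c; lia.
  by rewrite bin_small //; have := ltn_ord c; lia.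
- by rewrite ltnNge leq_addr /= addKn -jc.
- by rewrite ltnNge leq_addr /= addKn jc.
Qed.

Lemma det_hankel_coef_dr m N : (0 < N)%N -> \det (hankel_coef_dr m N) = 2 ^+ N.-1.
Proof.
case: N => [//|N] _; rewrite -det_tr det_trig; last first.
  apply/is_trig_mxP => i j lt_ij; rewrite !mxE /hankel_coef leq_addr addKn ifF; last by lia.
  by rewrite bin_small //; lia.
rewrite big_ord_recl !mxE /hankel_coef leq_addr addKn /= bin0 mul1r.
rewrite -[in RHS](card_ord N) -prodr_const; apply: eq_bigr => i _.
by rewrite !mxE /hankel_coef leq_addr addKn lift0 /= addnn binn.
Qed.

Lemma det_hankel_coef_mx m N : (0 < N)%N ->
  \det (hankel_coef_mx m (m + N)) =
  (-1) ^+ (m * N) * (\det (hankel_coef_ul m N) * 2 ^+ N.-1).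
Proof.
move=> N_gt0; have := det_row_perm (rot_perm m N) (hankel_coef_mx m (m + N)).
rewrite row_perm_hankel_coef_mx // det_lblock det_hankel_coef_dr // odd_rot_perm signr_odd.
by move=> ->; rewrite signrMK.
Qed.

Lemma prod_sym_shifts (R : comNzRingType) (a : R) c :
  \prod_(i < c.*2.+1) (a + c%:R - i%:R) = a * \prod_(1 <= t < c.+1) (a ^+ 2 - t%:R ^+ 2).
Proof.
elim: c a => [|c IHc] a; first by rewrite big_ord1 big_geq // subr0 addr0 mulr1.
rewrite doubleS big_ord_recl big_ord_recr /=.
rewrite (eq_bigr (fun i : 'I_c.*2.+1 => a + c%:R - i%:R)); last first.
  by move=> i _; rewrite /bump /= -!natr1; ring.
rewrite IHc [in RHS]big_nat_recr //= /bump /= -!natr1 -addnn natrD; ring.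
Qed.

Lemma bin_odd_fact k c : 'C(k + c, c.*2.+1)%:R * (c.*2.+1)`!%:R
  = k%:R * \prod_(1 <= t < c.+1) (k%:R ^+ 2 - t%:R ^+ 2) :> rat.
Proof.
have [le_kc | lt_ck] := leqP k c.
  rewrite bin_small ?mul0r; last by lia.
  case: k le_kc => [|k] lt_kc; first by rewrite mul0r.
  rewrite (@big_cat_nat _ _ _ k.+2) //= big_nat_recr //= subrr.
  by rewrite mulr0 mul0r mulr0.
rewrite -natrM bin_ffact ffact_prod natr_prod -prod_sym_shifts.
by apply: eq_bigr => i _; have lt_i := ltn_ord i; rewrite natrB ?natrD //; lia.
Qed.

(* [C(k + c, 2c + 1) = k Q_c(k^2) / (2c + 1)!] *)
Definition qpoly c : {poly rat} := \prod_(1 <= t < c.+1) ('X - (t%:R ^+ 2)%:P).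

Lemma horner_qpoly c x : (qpoly c).[x] = \prod_(1 <= t < c.+1) (x - t%:R ^+ 2).
Proof. by rewrite horner_prod; apply: eq_bigr => t _; rewrite hornerXsubC. Qed.

Lemma size_qpoly c : size (qpoly c) = c.+1.
Proof. by rewrite size_prod_XsubC size_iota subn1. Qed.

Lemma monic_qpoly c : qpoly c \is monic.
Proof. exact: monic_prod_XsubC. Qed.

Definition ul_lscale m N : 'rV[rat]_m := \row_(a < m) ((-1) ^+ (a + N) * (a + N)%:R).
Definition ul_rscale m : 'rV[rat]_m :=
  \row_(j < m) ((-1) ^+ (m - j.+1).+1 / (m - j.+1).*2.+1`!%:R).
Definition qpoly_mx m N : 'M[rat]_m := \matrix_(a, j) (qpoly (m - j.+1)).[(a + N)%:R ^+ 2].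

Lemma hankel_coef_ul_factor m N :
  hankel_coef_ul m N = diag_mx (ul_lscale m N) *m qpoly_mx m N *m diag_mx (ul_rscale m).
Proof.
apply/matrixP => a j; rewrite mul_mx_diag mul_diag_mx !mxE /hankel_coef leqNgt ltn_ord /=.
set c := (m - j.+1)%N; set k := (a + N)%N.
have fact_neq0 : (c.*2.+1)`!%:R != 0 :> rat by rewrite pnatr_eq0 -lt0n fact_gt0.
have -> : 'C(k + c, c.*2.+1)%:R = k%:R * (qpoly c).[k%:R ^+ 2] / (c.*2.+1)`!%:R :> rat.
  by rewrite horner_qpoly -bin_odd_fact mulfK.
by rewrite -addnS exprD; field.
Qed.

Definition qpoly_coef_mx m : 'M[rat]_m := \matrix_(j, d) (qpoly j)`_d.
Definition sq_nodes m N : 'rV[rat]_m := \row_(a < m) ((a + N)%:R ^+ 2).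

Lemma row_perm_qpoly_mx m N :
  row_perm (rev_perm m) (qpoly_mx m N)^T = qpoly_coef_mx m *m Vandermonde m (sq_nodes m N).
Proof.
apply/matrixP => j a; rewrite !mxE rev_permE.
have -> : (m - (m - j.+1).+1 = j)%N by have := ltn_ord j; lia.
rewrite (@horner_coef_wide _ m) ?size_qpoly //.
by apply: eq_bigr => d _; rewrite !mxE.
Qed.

Lemma det_qpoly_coef_mx m : \det (qpoly_coef_mx m) = 1.
Proof.
rewrite det_trig; last first.
  by apply/is_trig_mxP => i j lt_ij; rewrite mxE nth_default // size_qpoly.
apply: big1 => i _; rewrite mxE.
by have /monicP := monic_qpoly i; rewrite lead_coefE size_qpoly.
Qed.

Lemma det_qpoly_mx m N :
  \det (qpoly_mx m N) = (-1) ^+ 'C(m, 2) * \det (Vandermonde m (sq_nodes m N)).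
Proof.
rewrite -[LHS](signrMK 'C(m, 2)); congr (_ * _).
rewrite -det_tr -signr_odd -odd_rev_perm -det_row_perm.
by rewrite row_perm_qpoly_mx det_mulmx det_qpoly_coef_mx mul1r.
Qed.

Lemma pmS m x : pm m.+2 x =
  pm m.+1 x * \prod_(1 <= i < m.+2) ((2 * x + i + m.+1)%N%:R / (i + m.+1)%N%:R).
Proof.
rewrite /pm big_nat_recr //= big_nat1.
rewrite (@eq_big_nat _ _ _ 1 m.+1 _ (fun i => \prod_(i <= j < m.+1)
   ((2 * x + i + j)%N%:R / (i + j)%N%:R) * ((2 * x + i + m.+1)%N%:R / (i + m.+1)%N%:R))).
  by rewrite big_split /= [X in _ = _ * X]big_nat_recr //= !mulrA.
by move=> i /andP[_ lt_im]; rewrite big_nat_recr // ltnW.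
Qed.

Lemma factD a b : (a + b)`! = (a`! * \prod_(i < b) (a + i.+1))%N.
Proof.
elim: b => [|b IHb]; first by rewrite addn0 big_ord0 muln1.
by rewrite addnS factS IHb big_ord_recr /= mulnCA addnS (mulnC (a + b).+1).
Qed.

Lemma pmS_factor m x :
  (m + x.+1)%:R * (\prod_(i < m) ((m + x.+1)%:R ^+ 2 - (i + x.+1)%:R ^+ 2))
    / (m.*2.+1)`!%:R
  = \prod_(1 <= i < m.+2) ((2 * x + i + m.+1)%N%:R / (i + m.+1)%N%:R) :> rat.
Proof.
rewrite [RHS]big_nat_recr //= big_add1 /= big_mkord prodf_div.
pose P1 : rat := \prod_(i < m) (m - i)%N%:R.
pose P2 : rat := \prod_(i < m) (2 * x + i.+1 + m.+1)%N%:R.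
pose P3 : rat := \prod_(i < m) (i.+1 + m.+1)%N%:R.
have -> : \prod_(i < m) ((m + x.+1)%:R ^+ 2 - (i + x.+1)%:R ^+ 2) = P1 * P2 :> rat.
  rewrite -big_split; apply: eq_bigr => i _ /=.
  by rewrite natrB 1?ltnW // !natrD -!natr1; ring.
have -> : (m.*2.+1)`!%:R = m.+1%:R * P1 * P3 :> rat.
  rewrite /P1 /P3 -!natr_prod -ffact_prod ffactnn -!natrM -factS.
  have -> : m.*2.+1 = (m.+1 + m)%N by rewrite -addnn addSn.
  by rewrite factD; congr (_ * _)%:R; apply: eq_bigr => i _; rewrite addnC.
have P1_neq0 : P1 != 0 by rewrite /P1 -natr_prod -ffact_prod ffactnn pnatr_eq0 -lt0n fact_gt0.
have P3_neq0 : P3 != 0 by rewrite /P3 -natr_prod pnatr_eq0 -lt0n prodn_gt0.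
rewrite -/P2 -/P3 !natrD -!natr1; field.
by rewrite P1_neq0 P3_neq0 /= !natr1 -natrD !pnatr_eq0.
Qed.

Definition vdm_prod m x : rat := (\prod_(a < m) (a + x.+1)%N%:R) *
  (\prod_(i < m) \prod_(j < m | (i < j)%N) ((j + x.+1)%N%:R ^+ 2 - (i + x.+1)%N%:R ^+ 2)) *
  \prod_(c < m) ((c.*2.+1)`!%:R)^-1.

Lemma prod_ord_lt_recr (R : comPzSemiRingType) m (F : nat -> nat -> R) :
  \prod_(i < m.+1) \prod_(j < m.+1 | (i < j)%N) F i j =
  (\prod_(i < m) \prod_(j < m | (i < j)%N) F i j) * \prod_(i < m) F i m.
Proof.
rewrite big_ord_recr /= [X in _ * X]big1 ?mulr1; last first.
  by move=> j lt_mj; have := ltn_ord j; lia.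
rewrite -big_split; apply: eq_bigr => i _ /=.
by rewrite big_mkcond big_ord_recr /= -big_mkcond /= ltn_ord.
Qed.

Lemma vdm_prod_pm m x : vdm_prod m x = pm m.+1 x.
Proof.
elim: m => [|m IHm]; first by rewrite /vdm_prod /pm !big_ord0 big_geq // !mulr1.
rewrite pmS -IHm -pmS_factor /vdm_prod.
rewrite (@prod_ord_lt_recr _ m (fun i j => (j + x.+1)%N%:R ^+ 2 - (i + x.+1)%N%:R ^+ 2)).
rewrite !big_ord_recr /=; ring.
Qed.

Lemma det_hankel_coef_ul m x :
  \det (hankel_coef_ul m x.+1) = (-1) ^+ ('C(m.+1, 2) + m * x.+1) * vdm_prod m x.
Proof.
have sum_ord_id : (\sum_(a < m) a = 'C(m, 2))%N.
  by rewrite -(big_mkord xpredT (fun a => a)) bin2_sum.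
have lscale : \prod_(a < m) ul_lscale m x.+1 0 a =
    (-1) ^+ ('C(m, 2) + m * x.+1) * \prod_(a < m) (a + x.+1)%N%:R.
  rewrite /ul_lscale; under eq_bigr do rewrite mxE.
  rewrite big_split /= prodrXr big_split /= sum_ord_id sum_nat_const card_ord.
  by rewrite -natr_prod.
have rscale : \prod_(j < m) ul_rscale m 0 j =
    (-1) ^+ ('C(m, 2) + m) * \prod_(c < m) ((c.*2.+1)`!%:R)^-1.
  rewrite /ul_rscale (reindex_inj rev_ord_inj) /=.
  rewrite (eq_bigr (fun c : 'I_m => (-1) ^+ c.+1 * ((c.*2.+1)`!%:R)^-1)); last first.
    move=> c _; rewrite mxE /=.
    by have -> : (m - (m - c.+1).+1 = c)%N by have := ltn_ord c; lia.
  rewrite big_split /= prodrXr (eq_bigr (fun c : 'I_m => c + 1)%N) ?big_split /=.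
    by rewrite sum_ord_id sum_nat_const card_ord muln1.
  by move=> c _; rewrite addn1.
have vdm : \det (Vandermonde m (sq_nodes m x.+1)) = \prod_(i < m) \prod_(j < m | (i < j)%N)
    ((j + x.+1)%N%:R ^+ 2 - (i + x.+1)%N%:R ^+ 2).
  by rewrite det_Vandermonde; apply: eq_bigr => i _; apply: eq_bigr => j _; rewrite !mxE.
rewrite hankel_coef_ul_factor !det_mulmx !det_diag det_qpoly_mx vdm lscale rscale.
rewrite /vdm_prod binS bin1.
have signs : (-1) ^+ ('C(m, 2) + m * x.+1) * (-1) ^+ 'C(m, 2) * (-1) ^+ ('C(m, 2) + m)
    = (-1) ^+ ('C(m, 2) + m + m * x.+1) :> rat.
  rewrite -!exprD; set C := 'C(m, 2); set P := (m * x.+1)%N.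
  have -> : (C + P + C + (C + m) = C + m + P + 2 * C)%N by lia.
  by rewrite exprD exprM sqrrN expr1n mulr1.
by rewrite -signs; ring.
Qed.

Lemma Dhank_neg m x :
  Dhank (- m%:Z) (m + x.+1) = (-1) ^+ 'C(m.+1, 2) * 2 ^+ x * pm m.+1 x.
Proof.
rewrite /Dhank hankel_factor det_mulmx det_cbin_mx mul1r det_hankel_coef_mx //.
rewrite det_hankel_coef_ul vdm_prod_pm exprD /=.
have sq : (-1) ^+ (m * x.+1) * (-1) ^+ (m * x.+1) = 1 :> rat.
  by rewrite -signr_odd -signr_addb addbb.
transitivity ((-1) ^+ (m * x.+1) * (-1) ^+ (m * x.+1) *
              ((-1) ^+ 'C(m.+1, 2) * 2 ^+ x * pm m.+1 x)); first by ring.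
by rewrite sq mul1r.
Qed.

Theorem theorem7 (m : nat) (hm : (1 <= m)%N) :
  (forall n : nat, (1 <= n <= m)%N -> Dhank (- (m%:Z)) n = 0) /\
  (forall n : nat, (m.+1 <= n)%N ->
     Dhank (- (m%:Z)) n =
       (-1) ^+ 'C(m.+1, 2) * 2 ^+ (n - m.+1) * pm m.+1 (n - m.+1)).
Proof.
split=> [[//|n] /andP[_ le_nm] | n lt_mn].
  rewrite /Dhank (expand_det_row _ ord0) big1 // => j _.
  by rewrite mxE Bc_neg ?mul0r //=; have := ltn_ord j; lia.
by rewrite -Dhank_neg; congr Dhank; lia.
Qed.
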